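(* There is an absolute constant $C$ such that for every $r\ge2$ and every graphic matroid $M$ of rank $r$ on ground set $[n]$ (for any $n$), $R^{lin}_{1/3}(rank_M)\le C r^2\log r$.
   Context: A graphic matroid $M(G)$ of a (multi)graph $G$ whose edges are identified with $[n]$ has as independent sets exactly the edge sets forming forests; its rank function is $rank_M(S)=\max\{|I|: I\subseteq S, I \text{ independent}\}$, viewed as a function on $\mathbb F_2^n$ by identifying $x$ with $\{i:x_i=1\}$; its rank is $rank_M([n])$. For $S\subseteq[n]$, $\chi_S(x)=\sum_{i\in S}x_i\pmod2$. Exact randomized $\mathbb F_2$-sketch complexity: for $f\colon\mathbb F_2^n\to\mathbb R$ and $\delta\in[0,1]$, $R^{lin}_\delta(f)$ is the smallest integer $k$ such that there exists a probability distribution over $k$-tuples of subsets $\mathbf S_1,\dots,\mathbf S_k\subseteq[n]$ and a function $g\colon\mathbb F_2^k\to\mathbb R$ with $\Pr_{\mathbf S_1,\dots,\mathbf S_k}[g(\chi_{\mathbf S_1}(x),\dots,\chi_{\mathbf S_k}(x))=f(x)]\ge1-\delta$ for every $x\in\mathbb F_2^n$. *)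

From mathcomp Require Import all_boot.
From Stdlib Require Import Reals.
Set Implicit Arguments. Unset Strict Implicit. Unset Printing Implicit Defensive.

(* A multigraph with vertex set 'I_V and edge set 'I_n; edge e has ends (ends e).
   Loops and parallel edges are allowed. *)
Definition joins (n V : nat) (ends : 'I_n -> 'I_V * 'I_V) (e : 'I_n) (a b : 'I_V) : bool :=
  (ends e == (a, b)) || (ends e == (b, a)).

(* S contains a cycle: k >= 1 distinct edges es_0..es_{k-1} of S and k distinct
   vertices vs_0..vs_{k-1} such that es_i joins vs_i and vs_{i+1 mod k}.
   (k = 1: a loop; k = 2: two parallel edges.) *)
Definition has_cycle (n V : nat) (ends : 'I_n -> 'I_V * 'I_V) (S : {set 'I_n}) : bool :=
  [exists k : 'I_n.+1, (0 < k) &&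
    [exists es : {ffun 'I_k -> 'I_n}, [exists vs : {ffun 'I_k -> 'I_V},
      [&& injectiveb es, injectiveb vs &
          [forall i : 'I_k, (es i \in S) && joins ends (es i) (vs i) (vs (ordS i))]]]]].

Definition forest (n V : nat) (ends : 'I_n -> 'I_V * 'I_V) (S : {set 'I_n}) : bool :=
  ~~ has_cycle ends S.

Definition grank (n V : nat) (ends : 'I_n -> 'I_V * 'I_V) (S : {set 'I_n}) : nat :=
  \max_(I : {set 'I_n} | (I \subset S) && forest ends I) #|I|.

(* F_2^n is {ffun 'I_n -> bool}; x is identified with {i | x_i = 1} *)
Definition vec_set (n : nat) (x : {ffun 'I_n -> bool}) : {set 'I_n} := [set i | x i].

Definition chi (n : nat) (S : {set 'I_n}) (x : {ffun 'I_n -> bool}) : bool :=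
  \big[addb/false]_(i in S) x i.

Definition sketch_vec (n k : nat) (Ss : {ffun 'I_k -> {set 'I_n}}) (x : {ffun 'I_n -> bool})
  : {ffun 'I_k -> bool} := [ffun j => chi (Ss j) x].

Definition sketchable (n : nat) (f : {ffun 'I_n -> bool} -> R) (delta : R) (k : nat) : Prop :=
  exists p : {ffun 'I_k -> {set 'I_n}} -> R,
    (forall Ss, (0 <= p Ss)%R) /\
    \big[Rplus/0%R]_(Ss : {ffun 'I_k -> {set 'I_n}}) p Ss = 1%R /\
    exists g : {ffun 'I_k -> bool} -> R,
      forall x : {ffun 'I_n -> bool},
        (1 - delta <=
          \big[Rplus/0%R]_(Ss : {ffun 'I_k -> {set 'I_n}})
             (if Req_EM_T (g (sketch_vec Ss x)) (f x) then p Ss else 0%R))%R.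

(* R^lin_delta(f) <= b  (R^lin is the least such k, so this is: some k <= b works) *)
Definition Rlin_le (n : nat) (f : {ffun 'I_n -> bool} -> R) (delta b : R) : Prop :=
  exists k : nat, (INR k <= b)%R /\ sketchable f delta k.

From mathcomp Require Import all_boot.
From Stdlib Require Import Reals Lra.
From mathcomp Require Import zify.
Set Implicit Arguments. Unset Strict Implicit. Unset Printing Implicit Defensive.

(* The rank of an edge set only depends on which end pairs (a, b) of
   non-loop edges it realises: loops never lie in a forest and parallel copies
   are interchangeable.  All non-loop edges join vertices touched by a maximum
   forest, so there are at most (2r)^2 such pairs.  For each pair d we spend
   t = 2 floor(log2 r) + 6 parities chi_S, S a uniform subset of the edges with
   end pair d; if x has such an edge, each parity is 1 with probability 1/2,
   so all t vanish with probability 2^-t.  A union bound over the pairs bounds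
   the failure probability by (2r)^2 2^-t <= 1/3, and on success the decoder
   (the rank of all edges whose pair has a nonzero parity) is exact. *)

Section GraphicMatroid.
Variables (n V : nat) (ends : 'I_n -> 'I_V * 'I_V).

Definition cycle_in (S : {set 'I_n}) (k : nat)
    (es : {ffun 'I_k -> 'I_n}) (vs : {ffun 'I_k -> 'I_V}) : bool :=
  [&& 0 < k, injectiveb es, injectiveb vs &
      [forall i, (es i \in S) && joins ends (es i) (vs i) (vs (ordS i))]].

(* The bound k <= n in [has_cycle] is automatic, since the edges of a cycle
   are distinct. *)
Lemma has_cycleP (S : {set 'I_n}) :
  reflect (exists k es vs, @cycle_in S k es vs) (has_cycle ends S).
Proof.
apply: (iffP existsP) => [[k /andP[k0 /existsP[es /existsP[vs h]]]] |].
  by exists k, es, vs; rewrite /cycle_in k0.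
case=> k [es [vs /and4P[k0 ies ivs hS]]].
have kn : k < n.+1 by have := leq_card _ (injectiveP _ ies); rewrite !card_ord.
by exists (Ordinal kn); rewrite k0; apply/existsP; exists es; apply/existsP; exists vs;
  rewrite ies ivs.
Qed.

Lemma joinsE e a b : joins ends e a b -> ends e = (a, b) \/ ends e = (b, a).
Proof. by case/orP => /eqP ->; [left | right]. Qed.

Definition loop (e : 'I_n) : bool := (ends e).1 == (ends e).2.

Lemma forest0 : forest ends set0.
Proof.
apply/negP => /has_cycleP[[|k] [es [vs /and4P[// _ _ _ /forallP/(_ ord0)]]]].
by rewrite inE.
Qed.

(* A loop is a cycle of length one. *)
Lemma forest_noloop (I : {set 'I_n}) e : forest ends I -> e \in I -> ~~ loop e.
Proof.
move=> fI eI; apply/negP => le; move/negP: fI; apply; apply/has_cycleP.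
exists 1, [ffun=> e], [ffun=> (ends e).1]; apply/and4P; split => //.
- by apply/injectiveP => i j _; rewrite !ord1.
- by apply/injectiveP => i j _; rewrite !ord1.
apply/forallP => i; rewrite !ffunE eI /joins; move/eqP: le.
by case: (ends e) => a b /= ->; rewrite eqxx.
Qed.

(* Two distinct parallel edges form a cycle of length two. *)
Lemma forest_nopar (I : {set 'I_n}) e1 e2 : forest ends I -> e1 \in I -> e2 \in I ->
  ends e1 = ends e2 -> e1 = e2.
Proof.
move=> fI i1 i2 he; apply/eqP; apply/negPn/negP => ne.
have nl := forest_noloop fI i1.
move/negP: fI; apply; apply/has_cycleP.
exists 2, [ffun i : 'I_2 => if val i == 0 then e1 else e2],
  [ffun i : 'I_2 => if val i == 0 then (ends e1).1 else (ends e1).2].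
apply/and4P; split => //.
- apply/injectiveP => i j; rewrite !ffunE; apply: contra_eq => nij.
  by case: i j nij => [[|[|]]//] ? [[|[|]]//] ? //= _; rewrite // eq_sym.
- apply/injectiveP => i j; rewrite !ffunE; apply: contra_eq => nij.
  case: i j nij => [[|[|]]//] ? [[|[|]]//] ? //= _; apply: contraNneq nl => h;
    by rewrite /loop h.
apply/forallP => -[[|[|]]//] ?; rewrite !ffunE /= ?i1 ?i2 /joins -?he;
  by case: (ends e1) => a b; rewrite eqxx ?orbT.
Qed.

Lemma forest_map (I : {set 'I_n}) (rho : 'I_n -> 'I_n) :
  {in I, forall e, ends (rho e) = ends e} -> forest ends I -> forest ends (rho @: I).
Proof.
move=> hr fI; apply/negP => /has_cycleP[k [es [vs /and4P[k0 ies ivs /forallP H]]]].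
move/negP: fI; apply; apply/has_cycleP.
have pre i : {e | e \in I & rho e == es i}.
  by apply: sig2W; have /andP[/imsetP[e eI ->] _] := H i; exists e.
pose es' := [ffun i => s2val (pre i)].
have es'I i : es' i \in I by rewrite ffunE; exact: (s2valP (pre i)).
have rho_es' i : rho (es' i) = es i by rewrite ffunE; apply/eqP; exact: (s2valP' (pre i)).
exists k, es', vs; rewrite /cycle_in k0 ivs /=; apply/andP; split.
  apply/injectiveP => i j eij; apply: (injectiveP _ ies).
  by rewrite -rho_es' eij rho_es'.
apply/forallP => i; have /andP[_] := H i.
by rewrite es'I /joins -rho_es' hr.
Qed.

Lemma grank_ge (I S : {set 'I_n}) : I \subset S -> forest ends I -> #|I| <= grank ends S.
Proof. by move=> sIS fI; rewrite /grank (bigD1 I) /= ?sIS ?fI ?leq_maxl. Qed.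

Lemma grank_max (S : {set 'I_n}) :
  exists I : {set 'I_n}, [/\ I \subset S, forest ends I & #|I| = grank ends S].
Proof.
rewrite /grank (bigmax_eq_arg set0); last by rewrite sub0set forest0.
case: arg_maxnP; first by rewrite sub0set forest0.
by move=> I /andP[sIS fI] _; exists I.
Qed.

Lemma grank_mono (S T : {set 'I_n}) : S \subset T -> grank ends S <= grank ends T.
Proof.
move=> sST; have [I [sIS fI <-]] := grank_max S.
by apply: grank_ge => //; apply: subset_trans sST.
Qed.

(* Adding loops and parallel copies of edges of S does not change the rank:
   a maximal forest of T can be moved edge by edge into S. *)
Lemma grank_par (S T : {set 'I_n}) : S \subset T ->
  (forall e, e \in T -> e \notin S -> loop e \/ exists2 e', e' \in S & ends e' = ends e) ->
  grank ends T = grank ends S.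
Proof.
move=> sST hp; apply/eqP; rewrite eqn_leq (grank_mono sST) andbT.
have [I [sIT fI <-]] := grank_max T.
have move_in e : e \in I -> {e' | e' \in S & ends e' == ends e}.
  move=> eI; apply: sig2W; case: (boolP (e \in S)) => eS; first by exists e.
  case: (hp e (subsetP sIT _ eI) eS) => [le | [e' e'S he']].
    by move: (forest_noloop fI eI); rewrite le.
  by exists e'; rewrite // he'.
(* rho sends each edge of I to an edge of S with the same ends. *)
pose rho e := if insub e : {? e | e \in I} is Some u then s2val (move_in _ (valP u)) else e.
have rhoP e : e \in I -> rho e \in S /\ ends (rho e) = ends e.
  move=> eI; rewrite /rho insubT /=; split; first exact: (s2valP (move_in _ _)).
  by apply/eqP; exact: (s2valP' (move_in _ _)).
have inj : {in I &, injective rho}.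
  move=> e1 e2 i1 i2 he; apply: (forest_nopar fI i1 i2).
  by have [_ <-] := rhoP e1 i1; have [_ <-] := rhoP e2 i2; rewrite he.
rewrite -(card_in_imset inj); apply: grank_ge.
  by apply/subsetP => _ /imsetP[e eI ->]; have [] := rhoP e eI.
by apply: forest_map => // e eI; have [] := rhoP e eI.
Qed.

Definition covered (F : {set 'I_n}) : {set 'I_V} :=
  [set (ends f).1 | f in F] :|: [set (ends f).2 | f in F].

Lemma covered_card (F : {set 'I_n}) : #|covered F| <= 2 * #|F|.
Proof.
by rewrite mul2n -addnn (leq_trans (leq_card_setU _ _)) // leq_add ?leq_imset_card.
Qed.

Lemma joins_covered (F : {set 'I_n}) f a b : f \in F -> joins ends f a b ->
  a \in covered F /\ b \in covered F.
Proof.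
move=> fF /joinsE hf.
have [c1 c2] : (ends f).1 \in covered F /\ (ends f).2 \in covered F.
  by rewrite !inE !(imset_f (fun f => (ends f).1)) ?(imset_f (fun f => (ends f).2)) ?orbT.
by case: hf c1 c2 => -> /=.
Qed.

Lemma cycle_uses (F : {set 'I_n}) e k es vs :
  forest ends F -> @cycle_in (e |: F) k es vs -> exists i, es i = e.
Proof.
move=> /negP fF /and4P[k0 ies ivs /forallP H].
case: (pickP (fun i => es i == e)) => [i /eqP | none]; first by exists i.
case: fF; apply/has_cycleP; exists k, es, vs; rewrite /cycle_in k0 ies ivs.
apply/forallP => j; have /andP[/setU1P[ej | jF] ->] := H j; last by rewrite jF.
by move: (none j); rewrite ej eqxx.
Qed.

(* Both ends of a non-loop edge e on such a cycle are touched by F: the cycle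
   enters and leaves e through its two neighbouring edges, which lie in F. *)
Lemma cycle_ends_covered (F : {set 'I_n}) e k es vs i :
  @cycle_in (e |: F) k es vs -> es i = e -> ~~ loop e ->
  (ends e).1 \in covered F /\ (ends e).2 \in covered F.
Proof.
move=> /and4P[_ ies _ /forallP H] ei nle.
have next_covered j : es j != e -> vs j \in covered F /\ vs (ordS j) \in covered F.
  move=> nej; have /andP[/setU1P[ej | jF] hj] := H j; first by rewrite ej eqxx in nej.
  exact: joins_covered hj.
have /andP[_ /joinsE hi] := H i; rewrite ei in hi.
have nv : vs i != vs (ordS i).
  by apply: contraNneq nle => hv; rewrite /loop; case: hi => ->; rewrite hv eqxx.
have nSi : ordS i != i by apply: contraNneq nv => ->.
have nPi : ord_pred i != i by apply: contraNneq nSi => h; rewrite -{1}h ord_predK.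
have nSe : es (ordS i) != e by rewrite -ei (inj_eq (injectiveP _ ies)).
have nPe : es (ord_pred i) != e by rewrite -ei (inj_eq (injectiveP _ ies)).
have [cSi _] := next_covered _ nSe.
have [_] := next_covered _ nPe; rewrite ord_predK => ci.
by case: hi => ->.
Qed.

Lemma maxforest_covers (F : {set 'I_n}) e : forest ends F ->
  #|F| = grank ends [set: 'I_n] -> ~~ loop e ->
  (ends e).1 \in covered F /\ (ends e).2 \in covered F.
Proof.
move=> fF cF nle; case: (boolP (e \in F)) => eF.
  by apply: joins_covered eF _; rewrite /joins -surjective_pairing eqxx.
have /negPn/has_cycleP[k [es [vs cyc]]] : ~~ forest ends (e |: F).
  apply/negP => fF'; have := grank_ge (subsetT (e |: F)) fF'.
  by rewrite cardsU1 eF -cF ltnn.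
have [i ei] := cycle_uses fF cyc.
exact: cycle_ends_covered cyc ei nle.
Qed.

(* The end pairs of the non-loop edges; the rank of any edge set only depends
   on which of these pairs it realises. *)
Definition pairs : {set 'I_V * 'I_V} := ends @: [set e | ~~ loop e].

(* All non-loop edges live on the at most 2r vertices touched by a maximum
   forest, so there are at most (2r)^2 end pairs. *)
Lemma card_pairs :
  #|pairs| <= (2 * grank ends [set: 'I_n]) * (2 * grank ends [set: 'I_n]).
Proof.
have [F [_ fF cF]] := grank_max [set: 'I_n].
have sub : pairs \subset setX (covered F) (covered F).
  apply/subsetP => d /imsetP[e]; rewrite inE => nle ->.
  have [c1 c2] := maxforest_covers fF cF nle.
  by case: (ends e) c1 c2 => a b c1 c2; apply/setXP.
apply: leq_trans (subset_leq_card sub) _; rewrite cardsX -cF.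
exact: leq_mul (covered_card F) (covered_card F).
Qed.

End GraphicMatroid.

Lemma chi_D1 n (A : {set 'I_n}) (x : {ffun 'I_n -> bool}) i :
  i \in A -> chi A x = x i (+) chi (A :\ i) x.
Proof.
move=> iA; rewrite /chi (bigD1 i) //=; congr addb; apply: eq_bigl => j.
by rewrite !inE andbC.
Qed.

Lemma chi_true n (A : {set 'I_n}) (x : {ffun 'I_n -> bool}) :
  chi A x -> exists2 i, i \in A & x i.
Proof.
case: (pickP (fun i => (i \in A) && x i)) => [i /andP[iA xi] | none]; first by exists i.
by rewrite /chi big1 // => i iA; move: (none i); rewrite iA.
Qed.

Definition toggle n (e0 : 'I_n) (S : {set 'I_n}) : {set 'I_n} :=
  if e0 \in S then S :\ e0 else e0 |: S.

Lemma chi_toggle n (e0 : 'I_n) (S : {set 'I_n}) (x : {ffun 'I_n -> bool}) :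
  x e0 -> chi (toggle e0 S) x = ~~ chi S x.
Proof.
rewrite /toggle => xe0; case: ifPn => eS; first by rewrite (chi_D1 x eS) xe0 negbK.
by rewrite (chi_D1 x (setU11 e0 S)) xe0 setU1K.
Qed.

Lemma toggle_inj n (e0 : 'I_n) : injective (toggle e0).
Proof.
apply: (can_inj (g := toggle e0)) => S; rewrite /toggle.
case: (boolP (e0 \in S)) => eS; first by rewrite setD11 setD1K.
by rewrite setU11 setU1K.
Qed.

(* Exactly half of the subsets of P have even parity on x, as soon as x is 1
   somewhere on P: toggling that coordinate swaps the two halves. *)
Lemma half_even n (P : {set 'I_n}) (x : {ffun 'I_n -> bool}) e0 :
  e0 \in P -> x e0 ->
  2 * #|[set S in powerset P | ~~ chi S x]| = expn 2 #|P|.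
Proof.
move=> e0P xe0; pose A b := [set S in powerset P | chi S x == b].
have toggle_sub S : (toggle e0 S \subset P) = (S \subset P).
  rewrite /toggle; case: ifP => eS; last by rewrite subUset sub1set e0P.
  apply/idP/idP => [sP | sP]; last exact: subset_trans (subD1set S e0) sP.
  by rewrite -(setD1K eS) subUset sub1set e0P.
have flip b : toggle e0 @: A b \subset A (~~ b).
  apply/subsetP => T /imsetP[S]; rewrite !inE => /andP[sP /eqP hS] ->.
  by rewrite toggle_sub sP chi_toggle // hS eqxx.
have le b : #|A b| <= #|A (~~ b)|.
  by rewrite -(card_imset _ (@toggle_inj n e0)) subset_leq_card ?flip.
have e01 : #|A false| = #|A true| by apply/eqP; rewrite eqn_leq (le false) (le true).
have -> : [set S in powerset P | ~~ chi S x] = A false.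
  by apply/setP => S; rewrite !inE eqbF_neg.
rewrite mul2n -addnn {1}e01 -card_powerset -(cardsID [set S | chi S x] (powerset P)).
by congr (_ + _); apply: eq_card => S; rewrite !inE ?eqb_id ?eqbF_neg andbC.
Qed.

Lemma card_bigcup_le (I T : finType) (A : {pred I}) (B : I -> {set T}) :
  #|\bigcup_(i in A) B i| <= \sum_(i in A) #|B i|.
Proof.
elim/big_rec2: _ => [|i X s _ IH]; first by rewrite cards0.
by rewrite cardsU (leq_trans (leq_subr _ _)) // leq_add2l.
Qed.

Lemma card_ffun_family k (T : finType) (F : 'I_k -> {set T}) :
  #|[set Ts : {ffun 'I_k -> T} | [forall j, Ts j \in F j]]| = \prod_j #|F j|.
Proof. by rewrite -cardsXn; apply: eq_card => Ts; rewrite in_setXn. Qed.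

Lemma prod_halves k (J : {pred 'I_k}) (a b : 'I_k -> nat) :
  (forall j, b j = if j \in J then 2 * a j else a j) ->
  \prod_j b j = expn 2 #|J| * \prod_j a j.
Proof.
move=> hb; rewrite -prod_nat_const [X in _ = X * _]big_mkcond -big_split /=.
by apply: eq_bigr => j _; rewrite hb; case: (j \in J); rewrite ?mul1n.
Qed.

Lemma sum_indicator (T : finType) (A : {pred T}) : \sum_(i : T) ((i \in A) : nat) = #|A|.
Proof. by rewrite -sum1_card [RHS]big_mkcond; apply: eq_bigr => i _; case: (i \in A). Qed.

Lemma Rsum_INR (I : finType) (F : I -> nat) :
  \big[Rplus/0%R]_(i : I) INR (F i) = INR (\sum_(i : I) F i).
Proof. by rewrite (big_morph INR plus_INR (erefl (INR 0))). Qed.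

Lemma Rsum_div (I : finType) (F : I -> R) c :
  \big[Rplus/0%R]_(i : I) (F i / c)%R = (\big[Rplus/0%R]_(i : I) F i / c)%R.
Proof.
apply/esym/(big_morph (fun y => y / c)%R) => [a b|]; first exact: Rdiv_plus_distr.
by rewrite /Rdiv Rmult_0_l.
Qed.

Lemma Rsum_le (I : finType) (F G : I -> R) : (forall i, (F i <= G i)%R) ->
  (\big[Rplus/0%R]_(i : I) F i <= \big[Rplus/0%R]_(i : I) G i)%R.
Proof.
move=> h; apply: (big_ind2 (fun a b => (a <= b)%R)) => //; first exact: Rle_refl.
by move=> *; apply: Rplus_le_compat.
Qed.

(* Sampling uniformly from a nonempty set B of sketch tuples gives error 1/3 as
   soon as, for every input, a decoder g is correct on all tuples of a subset
   G missing at most a third of B. *)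
Lemma sketchable_uniform n k (f : {ffun 'I_n -> bool} -> R)
    (B : {set {ffun 'I_k -> {set 'I_n}}}) (g : {ffun 'I_k -> bool} -> R) :
  0 < #|B| ->
  (forall x, exists2 G : {set {ffun 'I_k -> {set 'I_n}}}, 3 * #|B :\: G| <= #|B| &
     forall Ss, Ss \in B -> Ss \in G -> g (sketch_vec Ss x) = f x) ->
  sketchable f (1/3) k.
Proof.
move=> B0 hG; have B0R : (0 < INR #|B|)%R by apply: lt_0_INR; apply/ltP.
pose p Ss := (INR (Ss \in B) / INR #|B|)%R.
have p_ge0 Ss : (0 <= p Ss)%R.
  by apply: Rmult_le_pos; [apply: pos_INR | apply/Rlt_le/Rinv_0_lt_compat].
exists p; split => //; split.
  by rewrite Rsum_div Rsum_INR sum_indicator; apply: Rinv_r; apply: Rgt_not_eq.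
exists g => x; have [G bad_small g_ok] := hG x.
apply: (@Rle_trans _ (INR #|B :&: G| / INR #|B|)%R).
  have ge : 2 * #|B| <= 3 * #|B :&: G| by have := cardsID G B; lia.
  have := le_INR _ _ (elimT leP ge); rewrite !mult_INR => geR.
  change (INR 2) with (1 + 1)%R in geR; change (INR 3) with (1 + 1 + 1)%R in geR.
  apply: (Rmult_le_reg_r (INR #|B|)) => //; rewrite /Rdiv Rmult_assoc Rinv_l; first lra.
  exact: Rgt_not_eq.
rewrite -sum_indicator -Rsum_INR -Rsum_div; apply: Rsum_le => Ss.
case: (boolP (Ss \in B :&: G)) => [/setIP[SB SG] | _]; last first.
  by rewrite /Rdiv Rmult_0_l; case: Req_dec_T => [? | ?]; [apply: p_ge0 | apply: Rle_refl].
rewrite g_ok //; case: Req_dec_T => [? | []] //=.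
by rewrite /p SB; apply: Rle_refl.
Qed.

Section Sketch.
Variables (n V : nat) (ends : 'I_n -> 'I_V * 'I_V) (t : nat).
Hypothesis t_gt0 : 0 < t.

(* t sketches are spent on each end pair; sketch j serves the pair of index
   j %/ t in the enumeration of [pairs]. *)
Definition sketch_len : nat := #|pairs ends| * t.

Lemma pair_index_lt (j : 'I_sketch_len) : j %/ t < #|pairs ends|.
Proof. by rewrite ltn_divLR. Qed.

Definition spair (j : 'I_sketch_len) : 'I_V * 'I_V :=
  enum_val (Ordinal (pair_index_lt j)).

Definition block (j : 'I_sketch_len) : {set 'I_n} := [set e | ends e == spair j].

(* The sketch distribution is uniform on this set of tuples. *)
Definition box : {set {ffun 'I_sketch_len -> {set 'I_n}}} :=
  [set Ss : {ffun 'I_sketch_len -> {set 'I_n}} | [forall j, Ss j \in powerset (block j)]].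

Definition decode (b : {ffun 'I_sketch_len -> bool}) : R :=
  INR (grank ends [set e | [exists j, b j && (spair j == ends e)]]).

Definition covers (x : {ffun 'I_n -> bool}) (Ss : {ffun 'I_sketch_len -> {set 'I_n}}) :
    bool :=
  [forall d in pairs ends, [exists e, x e && (ends e == d)] ==>
     [exists j, (spair j == d) && chi (Ss j) x]].

Lemma spair_in j : spair j \in pairs ends.
Proof. exact: enum_valP. Qed.

(* Each end pair is served by (at least) t sketches, the indices i t + u. *)
Lemma spair_count d : d \in pairs ends -> t <= #|[set j | spair j == d]|.
Proof.
move=> dD; set i := enum_rank_in dD d.
have lt (u : 'I_t) : i * t + u < sketch_len.
  apply: (@leq_trans (i.+1 * t)); first by rewrite mulSnr ltn_add2l ltn_ord.
  by rewrite leq_mul2r ltn_ord orbT.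
pose f (u : 'I_t) : 'I_sketch_len := Ordinal (lt u).
have f_inj : injective f by move=> u v [] /addnI/val_inj.
rewrite -{1}(card_ord t) -cardsT -(card_imset _ f_inj); apply: subset_leq_card.
apply/subsetP => _ /imsetP[u _ ->]; rewrite inE /spair.
have -> : Ordinal (pair_index_lt (f u)) = i.
  by apply: val_inj; rewrite /= divnMDl // divn_small ?addn0 ?ltn_ord.
by rewrite enum_rankK_in.
Qed.

(* On a covering tuple the decoder recovers the rank: the edges it collects are
   exactly the non-loop parallel copies of edges of x, which changes no rank. *)
Lemma decode_correct x Ss : Ss \in box -> covers x Ss ->
  decode (sketch_vec Ss x) = INR (grank ends (vec_set x)).
Proof.
rewrite inE => /forallP inbox /forallP cov; rewrite /decode; congr INR.
have {}inbox j : Ss j \subset block j by rewrite -powersetE.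
set E := [set e | _].
have memE e : (e \in E) =
    (ends e \in pairs ends) && [exists e', x e' && (ends e' == ends e)].
  rewrite inE; apply/existsP/andP => [[j /andP[]] | [eD ex]].
    rewrite ffunE => /chi_true[e' e'S xe'] /eqP hj; split; first by rewrite -hj spair_in.
    have := subsetP (inbox j) _ e'S; rewrite inE hj => he'.
    by apply/existsP; exists e'; rewrite xe'.
  have /existsP[j /andP[hj chij]] := implyP (implyP (cov (ends e)) eD) ex.
  by exists j; rewrite ffunE chij.
have xE : grank ends (vec_set x :|: E) = grank ends (vec_set x).
  apply: grank_par => [|e]; first exact: subsetUl.
  rewrite in_setU memE => /orP[-> // | /andP[_ /existsP[e' /andP[xe' /eqP he']]]] _.
  by right; exists e'; rewrite ?inE.
have EE : grank ends (vec_set x :|: E) = grank ends E.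
  apply: grank_par => [|e]; first exact: subsetUr.
  rewrite in_setU memE inE => /orP[xe | -> //].
  case: (boolP (loop ends e)) => [le | nle]; first by left.
  have eD : ends e \in pairs ends by apply/imsetP; exists e; rewrite ?inE.
  by rewrite eD; case/existsP; exists e; rewrite xe eqxx.
by rewrite -EE xE.
Qed.

Definition allowed (x : {ffun 'I_n -> bool}) (d : 'I_V * 'I_V) (j : 'I_sketch_len) :
    {set {set 'I_n}} :=
  if spair j == d then [set S in powerset (block j) | ~~ chi S x] else powerset (block j).

Definition missed (x : {ffun 'I_n -> bool}) (d : 'I_V * 'I_V) :
    {set {ffun 'I_sketch_len -> {set 'I_n}}} :=
  [set Ss : {ffun 'I_sketch_len -> {set 'I_n}} | [forall j, Ss j \in allowed x d j]].

(* If x has an edge e0 with end pair d, each of the >= t sketches of d vanishes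
   on half of the box, independently: a 2^-t fraction of the box misses d. *)
Lemma missed_card (x : {ffun 'I_n -> bool}) d e0 :
  d \in pairs ends -> x e0 -> ends e0 = d -> expn 2 t * #|missed x d| <= #|box|.
Proof.
move=> dD xe0 he0; rewrite /missed /box !card_ffun_family.
rewrite (@prod_halves _ [set j | spair j == d] (fun j => #|allowed x d j|)
                      (fun j => #|powerset (block j)|)).
  by rewrite leq_mul2r leq_pexp2l ?spair_count ?orbT.
move=> j; rewrite inE /allowed; case: eqP => [hj | _] //.
by rewrite (@half_even _ _ _ e0) ?card_powerset // inE he0 hj.
Qed.

(* Union bound over the at most |pairs| end pairs realised by x. *)
Lemma failure_bound (x : {ffun 'I_n -> bool}) : 3 * #|pairs ends| <= expn 2 t ->
  3 * #|box :\: [set Ss | covers x Ss]| <= #|box|.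
Proof.
move=> small; set Dx := [set d in pairs ends | [exists e, x e && (ends e == d)]].
have sub : box :\: [set Ss | covers x Ss] \subset \bigcup_(d in Dx) missed x d.
  apply/subsetP => Ss; rewrite !inE negb_forall => /andP[/existsP[d ncov] inbox].
  move: ncov; rewrite negb_imply => /andP[dD].
  rewrite negb_imply => /andP[ex /existsPn none].
  apply/bigcupP; exists d.
    by rewrite inE dD.
  rewrite inE; apply/forallP => j; rewrite /allowed.
  case: eqP => [hj | _]; last exact: forallP inbox j.
  rewrite inE (forallP inbox j); move: (none j).
  by rewrite hj eqxx.
have each d : d \in Dx -> expn 2 t * #|missed x d| <= #|box|.
  by rewrite inE => /andP[dD /existsP[e0 /andP[xe0 /eqP he0]]]; apply: missed_card he0.
have le_sum := leq_trans (subset_leq_card sub) (card_bigcup_le _ _).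
have le_box : expn 2 t * \sum_(d in Dx) #|missed x d| <= #|Dx| * #|box|.
  by rewrite big_distrr -sum_nat_const; apply: leq_sum.
have le_Dx : #|Dx| <= #|pairs ends|.
  by apply/subset_leq_card/subsetP => d; rewrite inE => /andP[].
rewrite -(@leq_pmul2l (expn 2 t)) ?expn_gt0 // mulnCA.
apply: (leq_trans (leq_mul (leqnn 3) (leq_mul (leqnn (expn 2 t)) le_sum))).
apply: (leq_trans (leq_mul (leqnn 3) le_box)); rewrite mulnA.
apply: (leq_trans (leq_mul (leq_mul (leqnn 3) le_Dx) (leqnn _))).
by rewrite leq_mul2r small orbT.
Qed.

Lemma sketch_rank : 3 * #|pairs ends| <= expn 2 t ->
  sketchable (fun x : {ffun 'I_n -> bool} => INR (grank ends (vec_set x))) (1/3) sketch_len.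
Proof.
move=> small; apply: (@sketchable_uniform _ _ _ box decode).
  apply/card_gt0P; exists [ffun=> set0]; rewrite inE.
  by apply/forallP => j; rewrite ffunE powersetE sub0set.
move=> x; exists [set Ss | covers x Ss]; first exact: failure_bound.
by move=> Ss inbox; rewrite inE; apply: decode_correct.
Qed.

End Sketch.

(* With L = floor(log2 r) and t = 2L + 6 sketches per end pair, the failure
   probability |pairs| 2^-t is at most 1/3, since |pairs| <= 4r^2 < 2^(2L+4). *)
Lemma param_bound r : 0 < r -> 12 * (r * r) <= expn 2 (2 * trunc_log 2 r + 6).
Proof.
move=> r0; have := trunc_log_ltn r (isT : 1 < 2); set a := expn 2 _.+1 => /ltnW ra.
have -> : expn 2 (2 * trunc_log 2 r + 6) = a * a * 16.
  by rewrite /a -!expnD (_ : 16 = expn 2 4) // -expnD; congr expn; lia.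
have := leq_mul ra ra; lia.
Qed.

Lemma INR_expn m k : INR (expn m k) = (INR m ^ k)%R.
Proof. by elim: k => [|k IH]; rewrite ?expn0 // expnS mult_INR IH. Qed.

(* floor(log2 r) <= log2 r <= 2 ln r, as ln 2 > 1/2. *)
Lemma trunc_log_le_ln r : 0 < r -> (INR (trunc_log 2 r) <= 2 * ln (INR r))%R.
Proof.
move=> r0; set L := trunc_log 2 r.
have Lr : (2 ^ L <= INR r)%R.
  by rewrite -[2%R]/(INR 2) -INR_expn; apply/le_INR/leP/trunc_logP.
have Lln : (INR L * ln 2 <= ln (INR r))%R.
  rewrite -ln_pow; last lra.
  case: (Rle_lt_or_eq_dec _ _ Lr) => [lt | ->]; [left; apply: ln_increasing => // | lra].
  by apply: pow_lt; lra.
have := ln_lt_2; have := pos_INR L; nra.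
Qed.

Theorem mainTheorem5 :
  exists C : R,
    forall (n V : nat) (ends : 'I_n -> 'I_V * 'I_V),
      let r := grank ends [set: 'I_n] in
      (2 <= r)%N ->
      Rlin_le (fun x : {ffun 'I_n -> bool} => INR (grank ends (vec_set x))) (1/3)%R
              (C * (INR r) ^ 2 * ln (INR r))%R.
Proof.
exists 64%R => n V ends r r2; have r0 : 0 < r by apply: leq_trans r2.
set L := trunc_log 2 r; set t := 2 * L + 6.
have L1 : 1 <= L by apply: trunc_log_max.
have hD := card_pairs ends; rewrite -/r in hD.
exists (sketch_len ends t); split; last first.
  apply: sketch_rank; first by rewrite /t addn_gt0 orbT.
  by apply: leq_trans (param_bound r0); lia.
have t8 : t <= 8 * L by rewrite /t; lia.
have k_le : sketch_len ends t <= 32 * (r * r) * L.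
  by have := leq_mul hD t8; rewrite /sketch_len; lia.
have := le_INR _ _ (elimT leP k_le).
rewrite !mult_INR (INR_IZR_INZ 32) [Z.of_nat 32]/= => kR.
have rr : (0 <= INR r * INR r)%R by apply: Rle_0_sqr.
have := Rmult_le_compat_l _ _ _ rr (trunc_log_le_ln r0); rewrite -/L; nra.
Qed.
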